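(* Let $n,m,T$ be positive integers, $\epsilon\ge 0$, and let $x(0),\dots,x(T)\in\mathbb{R}^n$ and $u(0),\dots,u(T-1)\in\mathbb{R}^m$ be given data, with $X_1:=[x(1)\ \cdots\ x(T)]$, $X_0:=[x(0)\ \cdots\ x(T-1)]$, $U_0:=[u(0)\ \cdots\ u(T-1)]$. Define $$\mathcal{C}:=\Big\{(A,B)\in\mathbb{R}^{n\times n}\times\mathbb{R}^{n\times m}:\ \begin{bmatrix} I & A & B\end{bmatrix}\begin{bmatrix} I & X_1\\ 0 & -X_0\\ 0 & -U_0\end{bmatrix}\begin{bmatrix} T\epsilon I & 0\\ 0 & -I\end{bmatrix}\begin{bmatrix} I & X_1\\ 0 & -X_0\\ 0 & -U_0\end{bmatrix}^\top\begin{bmatrix} I & A & B\end{bmatrix}^\top\succeq 0\Big\},$$ and, for $i\in\{0,\dots,T-1\}$, $$\mathcal{C}_i:=\{(A,B)\in\mathbb{R}^{n\times n}\times\mathbb{R}^{n\times m}:\ \epsilon I-(x(i+1)-Ax(i)-Bu(i))(x(i+1)-Ax(i)-Bu(i))^\top\succeq 0\},$$ and $\mathcal{I}:=\bigcap_{i=0}^{T-1}\mathcal{C}_i$. Then $\mathcal{I}\subseteq\mathcal{C}$.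
   Context: $\succeq 0$ denotes positive semidefiniteness. Equivalently, $\mathcal{C}$ is the set of $(A,B)$ for which there exists $D\in\mathbb{R}^{n\times T}$ with $X_1=AX_0+BU_0+D$ and $DD^\top\preceq T\epsilon I$, and $\mathcal{C}_i$ is the set of $(A,B)$ for which $d:=x(i+1)-Ax(i)-Bu(i)$ satisfies $|d|^2\le\epsilon$. *)

From mathcomp Require Import all_boot all_order all_algebra.
Set Implicit Arguments. Unset Strict Implicit. Unset Printing Implicit Defensive.
Import Order.TTheory GRing.Theory Num.Theory.
Local Open Scope ring_scope.

(* Positive semidefiniteness (the matrices to which it is applied below are
   symmetric): M is PSD iff v^T M v >= 0 for every real column vector v. *)
Definition psd (R : realFieldType) (k : nat) (M : 'M[R]_k) : Prop :=
  forall v : 'cV[R]_k, 0 <= (v^T *m M *m v) 0 0.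

Definition X1mx (R : realFieldType) (n T : nat) (x : nat -> 'cV[R]_n) : 'M[R]_(n, T) :=
  \matrix_(i < n, j < T) x j.+1 i 0.
Definition X0mx (R : realFieldType) (n T : nat) (x : nat -> 'cV[R]_n) : 'M[R]_(n, T) :=
  \matrix_(i < n, j < T) x j i 0.
Definition U0mx (R : realFieldType) (m T : nat) (u : nat -> 'cV[R]_m) : 'M[R]_(m, T) :=
  \matrix_(i < m, j < T) u j i 0.

Definition inC (R : realFieldType) (n m T : nat) (eps : R)
    (x : nat -> 'cV[R]_n) (u : nat -> 'cV[R]_m)
    (A : 'M[R]_n) (B : 'M[R]_(n, m)) : Prop :=
  let IAB : 'M[R]_(n, n + (n + m)) := row_mx 1%:M (row_mx A B) in
  let Mid : 'M[R]_(n + (n + m), n + T) :=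
    col_mx (row_mx 1%:M (X1mx T x))
           (row_mx 0 (col_mx (- X0mx T x) (- U0mx T u))) in
  let W : 'M[R]_(n + T) := block_mx ((T%:R * eps)%:M) 0 0 (- 1%:M) in
  psd (IAB *m Mid *m W *m Mid^T *m IAB^T).

Definition inCi (R : realFieldType) (n m : nat) (eps : R)
    (x : nat -> 'cV[R]_n) (u : nat -> 'cV[R]_m) (i : nat)
    (A : 'M[R]_n) (B : 'M[R]_(n, m)) : Prop :=
  let d := x i.+1 - A *m x i - B *m u i in
  psd (eps%:M - d *m d^T).

From mathcomp Require Import all_boot all_order all_algebra.
Set Implicit Arguments. Unset Strict Implicit. Unset Printing Implicit Defensive.
Import Order.TTheory GRing.Theory Num.Theory.
Local Open Scope ring_scope.

(* Multiplying out, [I A B] Mid = [I D] with D = X1 - A X0 - B U0 the matrix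
   whose columns are the residuals d(j) = x(j+1) - A x(j) - B u(j), so the
   matrix of C is T eps I - D D^T.  Since D D^T = \sum_j d(j) d(j)^T, this is
   \sum_j (eps I - d(j) d(j)^T), a sum of the T matrices defining the C_j,
   and positive semidefiniteness is preserved by sums. *)

Section MatrixIdentities.
Variable R : pzRingType.

Lemma mulmx_tr_sum_col (p q : nat) (M : 'M[R]_(p, q)) :
  M *m M^T = \sum_(j < q) col j M *m (col j M)^T.
Proof.
apply/matrixP=> a b; rewrite !mxE summxE; apply: eq_bigr => j _.
by rewrite !mxE big_ord1 !mxE.
Qed.

Lemma mul_row_block_tr (p q : nat) (c : R) (D : 'M[R]_(p, q)) :
  row_mx 1%:M D *m block_mx c%:M 0 0 (- 1%:M) *m (row_mx 1%:M D)^T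
  = c%:M - D *m D^T.
Proof.
rewrite mul_row_block !mulmx0 mulmxN mulmx1 mul1mx add0r addr0.
by rewrite tr_row_mx mul_row_col trmx1 mulmx1 mulNmx.
Qed.

Lemma mul_IAB_data (n m T : nat) (A : 'M[R]_n) (B : 'M[R]_(n, m))
    (X1 X0 : 'M[R]_(n, T)) (U0 : 'M[R]_(m, T)) :
  row_mx 1%:M (row_mx A B) *m
    col_mx (row_mx 1%:M X1) (row_mx 0 (col_mx (- X0) (- U0)))
  = row_mx 1%:M (X1 - A *m X0 - B *m U0).
Proof.
rewrite mul_row_col !mul_mx_row mul_row_col !mul1mx mulmx0 add_row_mx addr0.
by rewrite !mulmxN addrA.
Qed.

End MatrixIdentities.

Lemma psd_sum (R : realFieldType) (k : nat) (I : finType) (F : I -> 'M[R]_k) :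
  (forall i, psd (F i)) -> psd (\sum_i F i).
Proof.
move=> psdF v; rewrite mulmx_sumr mulmx_suml summxE.
by apply: sumr_ge0 => i _; apply: psdF.
Qed.

Section Residuals.
Variables (R : realFieldType) (n m T : nat).
Variables (x : nat -> 'cV[R]_n) (u : nat -> 'cV[R]_m).
Variables (A : 'M[R]_n) (B : 'M[R]_(n, m)).

Definition residual (j : nat) : 'cV[R]_n := x j.+1 - A *m x j - B *m u j.

Definition residual_mx : 'M[R]_(n, T) := X1mx T x - A *m X0mx T x - B *m U0mx T u.

Lemma col_residual_mx (j : 'I_T) : col j residual_mx = residual j.
Proof.
apply/matrixP=> a b; rewrite ord1 !mxE.
by congr (_ - _ - _); apply: eq_bigr => k _; rewrite !mxE.
Qed.

Lemma residual_mx_mul_tr :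
  residual_mx *m residual_mx^T = \sum_(j < T) residual j *m (residual j)^T.
Proof.
by rewrite mulmx_tr_sum_col; apply: eq_bigr => j _; rewrite col_residual_mx.
Qed.

End Residuals.

Theorem proposition3 (R : realFieldType) (n m T : nat)
    (hn : (0 < n)%N) (hm : (0 < m)%N) (hT : (0 < T)%N)
    (eps : R) (heps : 0 <= eps)
    (x : nat -> 'cV[R]_n) (u : nat -> 'cV[R]_m)
    (A : 'M[R]_n) (B : 'M[R]_(n, m)) :
  (forall i : nat, (i < T)%N -> inCi eps x u i A B) ->
  inC T eps x u A B.
Proof.
move=> inCi_all; rewrite /inC /=.
rewrite -(mulmxA _ _ (_^T)) -trmx_mul mul_IAB_data -/(residual_mx T x u A B).
rewrite mul_row_block_tr residual_mx_mul_tr.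
have -> : (T%:R * eps)%:M = \sum_(j < T) (eps%:M : 'M[R]_n).
  by rewrite sumr_const card_ord -raddfMn mulr_natl.
rewrite -sumrB; apply: psd_sum => j.
exact: inCi_all (ltn_ord j).
Qed.
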